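(* Let $R$ be a ring such that whenever $a,b\in R$ satisfy $a+b=1$, there exist $r,s\in R$ with $(1+ar)R(1+bs)\subseteq J(R)$. Then $R$ is feckly clean if and only if $\operatorname{Max}(R)$ is strongly zero-dimensional.
   Context: Rings are associative with identity, not necessarily commutative; ideals are two-sided; $J(R)$ is the Jacobson radical. An element $u\in R$ is full if $RuR=R$. An element $a\in R$ is feckly clean if there exist $e\in R$ and a full element $u\in R$ with $a=e+u$ and $eR(1-e)\subseteq J(R)$; $R$ is feckly clean if every element is feckly clean. $\operatorname{Max}(R)$ is the set of all maximal ideals of $R$, topologized so that the closed sets are exactly the sets $V(I)=\{P\in\operatorname{Max}(R): I\subseteq P\}$ for ideals $I$. A topological space $X$ is strongly zero-dimensional if for any two disjoint closed sets $A,B\subseteq X$ there exist disjoint clopen sets $C_1,C_2$ with $A\subseteq C_1$ and $B\subseteq C_2$. *)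

(* Rings: pzRingType (associative, with identity, not necessarily
   commutative; the zero ring is allowed). Subsets of R are predicates R -> Prop. *)
From HB Require Import structures.
From mathcomp Require Import all_boot all_order all_algebra.
Set Implicit Arguments. Unset Strict Implicit. Unset Printing Implicit Defensive.
Import GRing.Theory.
Local Open Scope ring_scope.

Section Defs.
Variable R : pzRingType.

Definition left_ideal (L : R -> Prop) : Prop :=
  L 0 /\ (forall x y, L x -> L y -> L (x + y)) /\ (forall r x, L x -> L (r * x)).

Definition maximal_left_ideal (L : R -> Prop) : Prop :=
  left_ideal L /\ ~ L 1 /\
  forall L' : R -> Prop, left_ideal L' -> ~ L' 1 -> (forall x, L x -> L' x) ->
    forall x, L' x -> L x.

Definition jacobson (x : R) : Prop :=
  forall L, maximal_left_ideal L -> L x.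

Definition ideal (I : R -> Prop) : Prop :=
  I 0 /\ (forall x y, I x -> I y -> I (x + y)) /\
  (forall r x, I x -> I (r * x)) /\ (forall r x, I x -> I (x * r)).

Definition maximal_ideal (P : R -> Prop) : Prop :=
  ideal P /\ ~ P 1 /\
  forall Q : R -> Prop, ideal Q -> ~ Q 1 -> (forall x, P x -> Q x) ->
    forall x, Q x -> P x.

(* u is full: RuR = R, where RuR is the set of finite sums of elements r u s *)
Definition full (u : R) : Prop :=
  forall x : R, exists s : seq (R * R), x = \sum_(p <- s) p.1 * u * p.2.

Definition feckly_clean_elt (a : R) : Prop :=
  exists e u : R, a = e + u /\ full u /\ (forall r, jacobson (e * r * (1 - e))).

Definition feckly_clean : Prop := forall a : R, feckly_clean_elt a.

(* Subsets of Max(R) are predicates on (R -> Prop); only their values on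
   maximal ideals matter. *)
Definition Max_closed (A : (R -> Prop) -> Prop) : Prop :=
  exists I, ideal I /\
    forall P, maximal_ideal P -> (A P <-> (forall x, I x -> P x)).

Definition Max_clopen (A : (R -> Prop) -> Prop) : Prop :=
  Max_closed A /\ Max_closed (fun P => ~ A P).

Definition Max_strongly_zero_dim : Prop :=
  forall A B : (R -> Prop) -> Prop,
    Max_closed A -> Max_closed B ->
    (forall P, maximal_ideal P -> ~ (A P /\ B P)) ->
    exists C1 C2 : (R -> Prop) -> Prop,
      Max_clopen C1 /\ Max_clopen C2 /\
      (forall P, maximal_ideal P -> ~ (C1 P /\ C2 P)) /\
      (forall P, maximal_ideal P -> A P -> C1 P) /\
      (forall P, maximal_ideal P -> B P -> C2 P).

End Defs.

(* For a maximal left ideal L, the hypothesis says that modulo the primitive ideal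
   ann(R/L) one of a, 1 - a is right invertible for every a. In such a ring one-sided
   inverses are two-sided and every non-unit vanishes, which forces L = ann(R/L): the
   maximal left ideals are exactly the maximal ideals, and they are prime. Hence
   e R (1 - e) <= J(R) means precisely that V(e) and V(1 - e) partition Max(R), i.e.
   that V(e) is clopen. A feckly clean decomposition a = e + u with a in I, 1 - a in K
   then separates V(I) from V(K), since the full element u lies in no maximal ideal.
   Conversely, if a clopen V(I1) with complement V(I2) separates V(a) from V(1 - a),
   write x + y = 1 with x in I1, y in I2; then e = 1 + x r as in the hypothesis
   satisfies V(1 - e) = V(I1) and V(e) = V(I2), and a - e is full. *)

From HB Require Import structures.
From mathcomp Require Import all_boot all_order all_algebra.
From mathcomp Require Import boolp classical_sets.
Import GRing.Theory.
Set Implicit Arguments. Unset Strict Implicit. Unset Printing Implicit Defensive.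
Local Open Scope ring_scope.
Local Open Scope classical_set_scope.

Lemma Zorn_above (T : Type) (P : set (set T)) (X0 : set T) :
  P X0 -> X0 !=set0 ->
  (forall F : set (set T), F `<=` P -> F !=set0 -> total_on F subset ->
     P (\bigcup_(X in F) X)) ->
  exists M, [/\ P M, X0 `<=` M & forall N, P N -> M `<=` N -> N `<=` M].
Proof.
move=> PX0 [x0 X0x0] Pchain.
(* The empty set is admitted so that the empty chain has an upper bound. *)
pose Q X := X = set0 \/ P X /\ X0 `<=` X.
have [M [QM maxM]] : exists M, Q M /\ forall N, M `<` N -> ~ Q N.
  apply: Zorn_bigcup => F FQ Ftot.
  pose F' := F `&` [set X | X !=set0].
  have F'P X : F' X -> P X /\ X0 `<=` X.
    by move=> [/FQ[->|//] [t []]].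
  have -> : \bigcup_(X in F) X = \bigcup_(X in F') X.
    apply/seteqP; split => t [Y FY Yt]; last by exists Y => //; case: FY.
    by exists Y => //; split => //; exists t.
  have [[X F'X]|F'0] := pselect (F' !=set0).
  - right; split; last by move=> t X0t; exists X => //; exact: (F'P X F'X).2.
    apply: Pchain => [Y /F'P[]//||Y Z [FY _] [FZ _]]; [by exists X|exact: Ftot].
  - by left; apply/seteqP; split => t // [Y F'Y _]; apply: F'0; exists Y.
case: QM => [M0|[PM X0M]].
  exfalso; apply: (maxM X0); last by right; split.
  rewrite M0; split; first exact: sub0set.
  by move=> /(_ x0 X0x0).
exists M; split => // N PN MN.
have [//|NM] := pselect (N `<=` M).
by exfalso; apply: (maxM N); [split|right; split=> //; exact: subset_trans MN].
Qed.

Section Ideals.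
Variable R : pzRingType.
Implicit Types (L I : R -> Prop) (x y r : R).

Lemma left_ideal0 L : left_ideal L -> L 0.
Proof. by case. Qed.

Lemma left_idealD L x y : left_ideal L -> L x -> L y -> L (x + y).
Proof. by move=> [_ [LD _]]; apply: LD. Qed.

Lemma left_idealMl L r x : left_ideal L -> L x -> L (r * x).
Proof. by move=> [_ [_ LM]]; apply: LM. Qed.

Lemma left_idealN L x : left_ideal L -> L x -> L (- x).
Proof. by move=> lL Lx; rewrite -mulN1r; exact: left_idealMl. Qed.

Lemma left_idealB L x y : left_ideal L -> L x -> L y -> L (x - y).
Proof. by move=> lL Lx Ly; apply: left_idealD => //; exact: left_idealN. Qed.

Lemma idealE I : ideal I <-> left_ideal I /\ forall r x, I x -> I (x * r).
Proof. by split=> [[I0 [ID [IMl IMr]]]|[[I0 [ID IMl]] IMr]]. Qed.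

Lemma ideal_left I : ideal I -> left_ideal I.
Proof. by case/idealE. Qed.

Lemma idealMr I x r : ideal I -> I x -> I (x * r).
Proof. by case/idealE=> _ IMr; apply: IMr. Qed.

Lemma bigcup_left_ideal (F : set (set R)) :
  F !=set0 -> F `<=` @left_ideal R -> total_on F subset ->
  left_ideal (\bigcup_(X in F) X).
Proof.
move=> [X FX] Fl Ftot; split; first by exists X => //; case: (Fl X FX).
split=> [x y [X1 FX1 X1x] [X2 FX2 X2y]|r x [X1 FX1 X1x]].
  have [X12|X21] := Ftot X1 X2 FX1 FX2.
  - by exists X2 => //; apply: left_idealD (Fl X2 FX2) (X12 x X1x) X2y.
  - by exists X1 => //; apply: left_idealD (Fl X1 FX1) X1x (X21 y X2y).
by exists X1 => //; apply: left_idealMl (Fl X1 FX1) X1x.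
Qed.

Lemma bigcup_ideal (F : set (set R)) :
  F !=set0 -> F `<=` @ideal R -> total_on F subset -> ideal (\bigcup_(X in F) X).
Proof.
move=> F0 Fi Ftot; apply/idealE; split.
  by apply: bigcup_left_ideal => // X /Fi/ideal_left.
by move=> r x [X FX Xx]; exists X => //; exact: idealMr (Fi X FX) Xx.
Qed.

Lemma exists_maximal_left_ideal L : left_ideal L -> ~ L 1 ->
  exists M, maximal_left_ideal M /\ L `<=` M.
Proof.
move=> lL L1; have [|||M [[lM M1] LM maxM]] :=
  @Zorn_above _ (fun X => left_ideal X /\ ~ X 1) L.
- by [].
- by exists 0; exact: left_ideal0.
- move=> F FP F0 Ftot; split; last by case=> X /FP[].
  by apply: bigcup_left_ideal => // X /FP[].
by exists M; do 3!split=> //; move=> N lN N1 MN; exact: maxM.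
Qed.

Lemma exists_maximal_ideal I : ideal I -> ~ I 1 ->
  exists P, maximal_ideal P /\ I `<=` P.
Proof.
move=> iI I1; have [|||P [[iP P1] IP maxP]] :=
  @Zorn_above _ (fun X => ideal X /\ ~ X 1) I.
- by [].
- by exists 0; case: iI.
- move=> F FP F0 Ftot; split; last by case=> X /FP[].
  by apply: bigcup_ideal => // X /FP[].
by exists P; do 3!split=> //; move=> Q iQ Q1 PQ; exact: maxP.
Qed.

End Ideals.

(* [ann L] is the annihilator of the left module R/L, a primitive ideal inside L. *)
Definition ann (R : pzRingType) (L : R -> Prop) (a : R) : Prop := forall w, L (a * w).

Lemma ann_ideal (R : pzRingType) (L : R -> Prop) : left_ideal L -> ideal (ann L).
Proof.
move=> lL; apply/idealE; split=> [|r x Lx w]; last by rewrite -mulrA.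
split=> [w|]; first by rewrite mul0r; exact: left_ideal0.
split=> [x y Lx Ly w|r x Lx w]; first by rewrite mulrDl; exact: left_idealD.
by rewrite -mulrA; exact: left_idealMl.
Qed.

Lemma ann_sub (R : pzRingType) (L : R -> Prop) (a : R) : ann L a -> L a.
Proof. by move/(_ 1); rewrite mulr1. Qed.

Section MaximalLeftIdeal.
Variables (R : pzRingType) (L : R -> Prop).
Hypothesis maxL : maximal_left_ideal L.
Implicit Types (a b c j t w x y z : R).

Let lL : left_ideal L := maxL.1.

Lemma maxl_inv z : ~ L z -> exists c, L (1 - c * z).
Proof.
move=> Lz; pose L' w := exists l c, L l /\ w = l + c * z.
have lL' : left_ideal L'.
  split; first by exists 0, 0; rewrite mul0r addr0; split=> //; exact: left_ideal0.
  split=> [_ _ [l1 [c1 [Ll1 ->]]] [l2 [c2 [Ll2 ->]]]|r _ [l [c [Ll ->]]]].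
    exists (l1 + l2), (c1 + c2); rewrite mulrDl addrACA; split=> //.
    exact: left_idealD.
  exists (r * l), (r * c); rewrite mulrDr mulrA; split=> //; exact: left_idealMl.
have [[l [c [Ll e1]]]|L'1] := pselect (L' 1); first by exists c; rewrite e1 addrK.
exfalso; apply: Lz; apply: (maxL.2.2 L') => //.
- by move=> x Lx; exists x, 0; rewrite mul0r addr0.
- by exists 0, 1; rewrite mul1r add0r; split=> //; exact: left_ideal0.
Qed.

Lemma maxl_prime a b : (forall t, L (a * t * b)) -> L a \/ L b.
Proof.
move=> Latb; have [|Lb] := pselect (L b); first by right.
left; have [c Lc] := maxl_inv Lb.
have -> : a = a * (1 - c * b) + a * c * b by rewrite mulrBr mulr1 mulrA subrK.
by apply: (left_idealD lL); [exact: left_idealMl|exact: Latb].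
Qed.

Lemma maxl_colon w : ~ L w -> maximal_left_ideal (fun z => L (z * w)).
Proof.
move=> Lw; have lLw : left_ideal (fun z => L (z * w)).
  split; first by rewrite mul0r; exact: left_ideal0.
  split=> [x y Lx Ly|r x Lx]; first by rewrite mulrDl; exact: left_idealD.
  by rewrite -mulrA; exact: left_idealMl.
split=> //; split=> [|L' lL' L'1 LwL' x L'x]; first by rewrite mul1r.
have [//|Lxw] := pselect (L (x * w)).
have [c Lc] := maxl_inv Lxw; exfalso; apply: L'1.
have L'wcx : L' (w * c * x) by exact: left_idealMl.
have L'wcx1 : L' (w * c * x - 1).
  apply: LwL'; rewrite mulrBl mul1r -!mulrA -[X in _ - X]mulr1 -mulrBr.
  rewrite -opprB mulrN; apply: (left_idealN lL); exact: (left_idealMl _ lL).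
by have := left_idealB lL' L'wcx L'wcx1; rewrite opprB addrC subrK.
Qed.

Lemma jacobson_ann j : jacobson j -> ann L j.
Proof.
move=> Jj w; have [Lw|Lw] := pselect (L w); first exact: (left_idealMl _ lL).
exact: (Jj _ (maxl_colon Lw)).
Qed.

Lemma ann_prime a b : (forall t, ann L (a * t * b)) -> ann L a \/ ann L b.
Proof.
move=> Aatb; have [|Ab] := pselect (ann L b); first by right.
have /existsNP[w Lbw] := Ab.
left=> v; have Lavbw t : L (a * v * t * (b * w)).
  by rewrite mulrA -(mulrA a v t); exact: Aatb.
by case: (maxl_prime Lavbw).
Qed.

End MaximalLeftIdeal.

Section Congruence.
Variables (R : pzRingType) (I : R -> Prop).
Hypothesis idI : ideal I.
Implicit Types (x y z : R).

Definition eqmod x y := I (x - y).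

Let lI : left_ideal I := ideal_left idI.

Lemma eqmod_sym {x y} : eqmod x y -> eqmod y x.
Proof. by move=> xy; rewrite /eqmod -opprB; exact: (left_idealN lI). Qed.

Lemma eqmod_trans {x} y {z} : eqmod x y -> eqmod y z -> eqmod x z.
Proof. by move=> xy yz; have := left_idealD lI xy yz; rewrite addrA subrK. Qed.

Lemma eqmodMl z {x y} : eqmod x y -> eqmod (z * x) (z * y).
Proof. by rewrite /eqmod -mulrBr; exact: (left_idealMl _ lI). Qed.

Lemma eqmodMr z {x y} : eqmod x y -> eqmod (x * z) (y * z).
Proof. by rewrite /eqmod -mulrBl; exact: idealMr. Qed.

Lemma eqmodM x x' y y' : eqmod x x' -> eqmod y y' -> eqmod (x * y) (x' * y').
Proof. by move=> /(eqmodMr y) xy /(eqmodMl x') yy'; exact: eqmod_trans xy yy'. Qed.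

End Congruence.

Section QuasiDuo.
Variable R : pzRingType.
Hypothesis hR : forall a b : R, a + b = 1 ->
  exists r s : R, forall t : R, jacobson ((1 + a * r) * t * (1 + b * s)).
Implicit Types (L P : R -> Prop) (a b e j t : R).

Section AtMaximalLeftIdeal.
Variable L : R -> Prop.
Hypothesis maxL : maximal_left_ideal L.
Implicit Types (c r s x y z : R).

Let lL : left_ideal L := maxL.1.
Let idA : ideal (ann L) := ann_ideal lL.
Local Notation eqA := (eqmod (ann L)).
Local Notation eqA_sym := (eqmod_sym idA).
Local Notation eqA_trans := (eqmod_trans idA).
Local Notation eqAMl := (eqmodMl idA).
Local Notation eqAMr := (eqmodMr idA).

Lemma ann_rinv_or a b : a + b = 1 ->
  (exists r, eqA (a * r) 1) \/ (exists s, eqA (b * s) 1).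
Proof.
move=> ab1; have [r [s Jrs]] := hR ab1.
have [Ar|As] : ann L (1 + a * r) \/ ann L (1 + b * s).
  by apply: (ann_prime maxL) => t; exact: (jacobson_ann maxL).
- left; exists (- r); rewrite /eqmod mulrN -opprD addrC.
  exact: (left_idealN (ideal_left idA)).
- right; exists (- s); rewrite /eqmod mulrN -opprD addrC.
  exact: (left_idealN (ideal_left idA)).
Qed.

(* [e = z y] is idempotent modulo [ann L]; by [ann_rinv_or] either [e] is right
   invertible, hence [e = 1], or [1 - e] is, which forces [e = 0] and then
   [1 = (y z)^2 = y e z = 0]. *)
Lemma ann_rinv_sym y z : eqA (y * z) 1 -> eqA (z * y) 1.
Proof.
move=> yz1; set e := z * y.
have ee : eqA (e * e) e by have := eqAMr y (eqAMl z yz1); rewrite mulr1 /e !mulrA.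
have [[c ec1]|[c ec1]] := ann_rinv_or (subrKC e 1).
  have e_eec : eqA e (e * e * c) by have := eqAMl e (eqA_sym ec1); rewrite mulr1 mulrA.
  exact: eqA_trans e_eec (eqA_trans (eqAMr c ee) ec1).
have e0 : eqA e 0.
  have := eqAMl e (eqA_sym ec1); rewrite mulr1 mulrA mulrBr mulr1 => /eqA_trans; apply.
  by rewrite -(mul0r c); apply: eqAMr; rewrite /eqmod subr0; exact: eqA_sym ee.
have yzyz : eqA 1 (y * e * z).
  by have := eqmodM idA yz1 yz1; rewrite mulr1 /e !mulrA => /eqA_sym.
have yez : eqA (y * e * z) 0 by have := eqAMr z (eqAMl y e0); rewrite mulr0 mul0r.
have := eqA_trans yzyz yez; rewrite /eqmod subr0 => /ann_sub L1.
by case: (maxL.2.1 L1).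
Qed.

Lemma ann_rinv_notin z y : eqA (z * y) 1 -> ~ L z.
Proof.
move=> /ann_rinv_sym/ann_sub yz1 Lz; apply: maxL.2.1.
by have := left_idealB lL (left_idealMl y lL Lz) yz1; rewrite opprB addrC subrK.
Qed.

Lemma maxl_ideal : ideal L.
Proof.
apply/idealE; split=> // t x Lx; apply: contrapT => Lxt.
have [c Lc] := maxl_inv maxL Lxt.
have [[r cxtr]|[s cxts]] := ann_rinv_or (subrKC (c * (x * t)) 1).
  apply: (ann_rinv_notin (y := t * (r * c))) Lx.
  by move: cxtr; rewrite -mulrA => /ann_rinv_sym; rewrite !mulrA.
exact: ann_rinv_notin cxts Lc.
Qed.

End AtMaximalLeftIdeal.

Lemma maxl_maximal_ideal L : maximal_left_ideal L -> maximal_ideal L.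
Proof.
move=> maxL; split; first exact: maxl_ideal.
split=> [|Q iQ Q1 LQ]; first exact: maxL.2.1.
exact: maxL.2.2 Q (ideal_left iQ) Q1 LQ.
Qed.

Lemma maximal_ideal_maxl P : maximal_ideal P -> maximal_left_ideal P.
Proof.
move=> [iP [P1 maxP]].
have [L [maxL PL]] := exists_maximal_left_ideal (ideal_left iP) P1.
have LP : L `<=` P := maxP L (maxl_ideal maxL) maxL.2.1 PL.
by have -> : P = L by apply/seteqP; split.
Qed.

Lemma maximal_ideal_jacobson P j : maximal_ideal P -> jacobson j -> P j.
Proof. by move=> /maximal_ideal_maxl maxP; apply. Qed.

Lemma maximal_ideal_prime P a b :
  maximal_ideal P -> (forall t, P (a * t * b)) -> P a \/ P b.
Proof. by move=> /maximal_ideal_maxl maxP; exact: maxl_prime. Qed.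

Lemma jacobson_corner e :
  (forall t, jacobson (e * t * (1 - e))) <->
  (forall P, maximal_ideal P -> P e \/ P (1 - e)).
Proof.
split=> [Je P maxP|splitP t L maxL].
  by apply: maximal_ideal_prime => // t; exact: maximal_ideal_jacobson.
have [Le|L1e] := splitP L (maxl_maximal_ideal maxL).
  by have iL := maxl_ideal maxL; exact: idealMr _ iL (idealMr _ iL Le).
exact: left_idealMl _ maxL.1 L1e.
Qed.

End QuasiDuo.

Section MaxSpectrum.
Variable R : pzRingType.
Implicit Types (A : (R -> Prop) -> Prop) (I K P : R -> Prop) (a b e u x z : R).

Definition principal_ideal z : R -> Prop :=
  fun x => exists s : seq (R * R), x = \sum_(p <- s) p.1 * z * p.2.

Lemma principal_ideal_ideal z : ideal (principal_ideal z).
Proof.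
split; first by exists [::]; rewrite big_nil.
split=> [_ _ [s1 ->] [s2 ->]|]; first by exists (s1 ++ s2); rewrite big_cat.
split=> r _ [s ->].
  exists [seq (r * p.1, p.2) | p <- s]; rewrite big_map mulr_sumr.
  by apply: eq_bigr => p _; rewrite !mulrA.
exists [seq (p.1, p.2 * r) | p <- s]; rewrite big_map mulr_suml.
by apply: eq_bigr => p _; rewrite !mulrA.
Qed.

Lemma principal_ideal_id z : principal_ideal z z.
Proof. by exists [:: (1, 1)]; rewrite big_seq1 mul1r mulr1. Qed.

Lemma principal_ideal_min I z : ideal I -> I z -> principal_ideal z `<=` I.
Proof.
move=> iI Iz _ [s ->]; have lI := ideal_left iI.
elim: s => [|p s IHs]; first by rewrite big_nil; exact: left_ideal0.
rewrite big_cons; apply: (left_idealD lI) IHs.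
exact: (idealMr _ iI) (left_idealMl _ lI Iz).
Qed.

Lemma maximal_ideal_exclusive P x : maximal_ideal P -> ~ (P x /\ P (1 - x)).
Proof.
move=> [iP [P1 _]] [Px P1x]; apply: P1.
by have := left_idealD (ideal_left iP) Px P1x; rewrite subrKC.
Qed.

Lemma full_notin_maximal u P : full u -> maximal_ideal P -> ~ P u.
Proof.
move=> fu [iP [P1 _]] Pu; apply: P1.
exact: principal_ideal_min iP Pu 1 (fu 1).
Qed.

Lemma full_of_notin_maximal u : (forall P, maximal_ideal P -> ~ P u) -> full u.
Proof.
move=> uP; have iu := principal_ideal_ideal u.
have [u1 x|u1] := pselect (principal_ideal u 1).
  by have := idealMr x iu u1; rewrite mul1r.
have [P [maxP uP']] := exists_maximal_ideal iu u1.
by exfalso; apply: (uP P maxP); apply: uP'; exact: principal_ideal_id.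
Qed.

Lemma comaximal I K : ideal I -> ideal K ->
  (forall P, maximal_ideal P -> ~ (I `<=` P /\ K `<=` P)) ->
  exists a b, [/\ I a, K b & a + b = 1].
Proof.
move=> iI iK IK; have lI := ideal_left iI; have lK := ideal_left iK.
pose S x := exists a b, [/\ I a, K b & x = a + b].
have [[a [b [Ia Kb ab]]]|S1] := pselect (S 1); first by exists a, b.
have iS : ideal S.
  apply/idealE; split; last first.
    move=> r _ [a [b [Ia Kb ->]]]; exists (a * r), (b * r).
    by rewrite mulrDl; split=> //; exact: idealMr.
  split; first by exists 0, 0; rewrite addr0; split=> //; exact: left_ideal0.
  split=> [_ _ [a [b [Ia Kb ->]]] [a' [b' [Ia' Kb' ->]]]|r _ [a [b [Ia Kb ->]]]].
    exists (a + a'), (b + b'); rewrite addrACA.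
    by split=> //; [exact: left_idealD lI Ia Ia'|exact: left_idealD lK Kb Kb'].
  exists (r * a), (r * b); rewrite mulrDr.
  by split=> //; [exact: left_idealMl _ lI Ia|exact: left_idealMl _ lK Kb].
have [P [maxP SP]] := exists_maximal_ideal iS S1.
exfalso; apply: (IK P maxP); split=> x Hx; apply: SP.
- by exists x, 0; rewrite addr0; split=> //; exact: left_ideal0.
- by exists 0, x; rewrite add0r; split=> //; exact: left_ideal0.
Qed.

Lemma Max_closed_at z : Max_closed (fun P => P z).
Proof.
exists (principal_ideal z); split=> [|P [iP _]]; first exact: principal_ideal_ideal.
split=> [Pz|zP]; first exact: principal_ideal_min.
exact/zP/principal_ideal_id.
Qed.

Lemma Max_closed_ext A A' : (forall P, maximal_ideal P -> A P <-> A' P) ->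
  Max_closed A' -> Max_closed A.
Proof.
move=> AA' [I [iI A'I]]; exists I; split=> // P maxP.
by rewrite (propext (AA' P maxP)); exact: A'I.
Qed.

Lemma Max_clopen_split e :
  (forall P, maximal_ideal P -> P e \/ P (1 - e)) -> Max_clopen (fun P => P e).
Proof.
move=> splitP; split; first exact: Max_closed_at.
apply: Max_closed_ext (Max_closed_at (1 - e)) => P maxP.
split=> [Pe|P1e Pe]; first by case: (splitP P maxP).
exact: maximal_ideal_exclusive maxP (conj Pe P1e).
Qed.

End MaxSpectrum.

Section FecklyClean.
Variable R : pzRingType.
Hypothesis hR : forall a b : R, a + b = 1 ->
  exists r s : R, forall t : R, jacobson ((1 + a * r) * t * (1 + b * s)).

Lemma feckly_clean_Max_szd : feckly_clean R -> Max_strongly_zero_dim R.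
Proof.
move=> fcR A B [I [iI AI]] [K [iK BK]] AB.
have [a [b [Ia Kb ab1]]] : exists a b, [/\ I a, K b & a + b = 1].
  apply: comaximal => // P maxP [IP KP].
  exact: AB P maxP (conj ((AI P maxP).2 IP) ((BK P maxP).2 KP)).
have [e [u [aeu [fu Je]]]] := fcR a.
have splitP := (jacobson_corner hR e).1 Je.
have splitP' P : maximal_ideal P -> P (1 - e) \/ P (1 - (1 - e)).
  by rewrite opprB subrKC or_comm; exact: splitP.
exists (fun P => P (1 - e)), (fun P => P e).
split; first exact: Max_clopen_split splitP'.
split; first exact: Max_clopen_split splitP.
split=> [P maxP [P1e Pe]|]; first exact: maximal_ideal_exclusive maxP (conj Pe P1e).
split=> P maxP => [AP|BP]; have lP := ideal_left maxP.1.
- have Pa : P a := (AI P maxP).1 AP a Ia.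
  case: (splitP P maxP) => // Pe; exfalso; apply: full_notin_maximal fu maxP _.
  have -> : u = a - e by rewrite aeu (addrC e) addrK.
  exact: left_idealB lP Pa Pe.
- have Pb : P b := (BK P maxP).1 BP b Kb.
  case: (splitP P maxP) => // P1e; exfalso; apply: full_notin_maximal fu maxP _.
  have -> : u = (1 - e) - b by rewrite -ab1 aeu addrAC addrK (addrC e) addrK.
  exact: left_idealB lP P1e Pb.
Qed.

Lemma Max_szd_feckly_clean : Max_strongly_zero_dim R -> feckly_clean R.
Proof.
move=> szdR a.
have [C1 [C2 [[[I1 [iI1 C1I1]] [I2 [iI2 C1I2]]] [_ [C12 [AC1 BC2]]]]]] :=
  szdR _ _ (Max_closed_at a) (Max_closed_at (1 - a))
    (fun P maxP => maximal_ideal_exclusive maxP).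
have [x [y [I1x I2y xy1]]] : exists x y, [/\ I1 x, I2 y & x + y = 1].
  apply: comaximal => // P maxP [I1P I2P].
  exact: (C1I2 P maxP).2 I2P ((C1I1 P maxP).2 I1P).
have [r [s Jrs]] := hR xy1; set e := 1 + x * r.
have e_C1 P : maximal_ideal P -> C1 P -> P (1 - e).
  move=> maxP /(C1I1 P maxP)/(_ x I1x) Px.
  rewrite /e opprD addrA subrr add0r.
  exact: left_idealN (ideal_left maxP.1) (idealMr r maxP.1 Px).
have e_nC1 P : maximal_ideal P -> ~ C1 P -> P e.
  move=> maxP /(C1I2 P maxP)/(_ y I2y) Py.
  have [//|P1ys] := maximal_ideal_prime hR maxP
    (fun t => maximal_ideal_jacobson hR maxP (Jrs t)).
  exfalso; apply: (maximal_ideal_exclusive maxP (x := - (y * s))).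
  rewrite opprK; split=> //.
  exact: left_idealN (ideal_left maxP.1) (idealMr s maxP.1 Py).
exists e, (a - e); split; first by rewrite addrC subrK.
split.
  apply: full_of_notin_maximal => P maxP Pae; have lP := ideal_left maxP.1.
  have [C1P|nC1P] := pselect (C1 P).
    apply: (C12 P maxP); split=> //; apply: BC2 => //.
    have -> : 1 - a = (1 - e) - (a - e) by rewrite opprB addrA subrK.
    exact: left_idealB lP (e_C1 P maxP C1P) Pae.
  apply/nC1P/AC1 => //; rewrite -(subrK e a).
  exact: left_idealD lP Pae (e_nC1 P maxP nC1P).
apply/(jacobson_corner hR) => P maxP.
by have [/(e_C1 P maxP)|/(e_nC1 P maxP)] := pselect (C1 P); [right|left].
Qed.

End FecklyClean.

Theorem corollary3p7 (R : pzRingType)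
  (hR : forall a b : R, a + b = 1 ->
        exists r s : R, forall t : R, jacobson ((1 + a * r) * t * (1 + b * s))) :
  feckly_clean R <-> Max_strongly_zero_dim R.
Proof.
split; [exact: feckly_clean_Max_szd | exact: Max_szd_feckly_clean].
Qed.
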